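(* Fix $\lambda_1,\lambda_2,\lambda_3\in\mathbb{Z}_{\ge0}$ and an infinite reduced sequence $\mathbf{w}=[w_1,w_2,\dots]$. Then the ratio number sequence $\{k_j\}_{j\ge1}$ associated with $\mathbf{w}$ is strictly increasing.
   Context: Generalized Markov mutations: $\mu_1(x_1,x_2,x_3)=(\frac{x_2^2+\lambda_1x_2x_3+x_3^2}{x_1},x_2,x_3)$, $\mu_2(x_1,x_2,x_3)=(x_1,\frac{x_1^2+\lambda_2x_1x_3+x_3^2}{x_2},x_3)$, $\mu_3(x_1,x_2,x_3)=(x_1,x_2,\frac{x_1^2+\lambda_3x_1x_2+x_2^2}{x_3})$. A sequence with entries in $\{1,2,3\}$ is reduced if consecutive entries differ. Ratio number sequence: $T_0=(1,1,1)$, $T_j=\mu_{w_j}(T_{j-1})$, and $k_j$ is the $w_j$-th component of $T_j$ divided by the product of the other two components of $T_j$. *)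

(* values are rationals (the mutation values are positive
   rationals; actually positive integers, but division is taken in rat). *)
From mathcomp Require Import all_boot all_order all_algebra.
Set Implicit Arguments. Unset Strict Implicit. Unset Printing Implicit Defensive.
Import Order.TTheory GRing.Theory Num.Theory.
Local Open Scope ring_scope.

Definition triple := (rat * rat * rat)%type.

Definition mu (l1 l2 l3 : nat) (i : nat) (x : triple) : triple :=
  let: (x1, x2, x3) := x in
  if i == 1%N then ((x2 ^+ 2 + l1%:R * x2 * x3 + x3 ^+ 2) / x1, x2, x3)
  else if i == 2%N then (x1, (x1 ^+ 2 + l2%:R * x1 * x3 + x3 ^+ 2) / x2, x3)
  else if i == 3%N then (x1, x2, (x1 ^+ 2 + l3%:R * x1 * x2 + x2 ^+ 2) / x3)
  else x.

(* T_0 = (1,1,1), T_j = mu_{w_j}(T_{j-1}); w is indexed from 1 (w 0 unused) *)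
Fixpoint Tseq (l1 l2 l3 : nat) (w : nat -> nat) (j : nat) : triple :=
  match j with
  | 0 => (1, 1, 1)
  | j'.+1 => mu l1 l2 l3 (w j) (Tseq l1 l2 l3 w j')
  end.

Definition ratio (i : nat) (x : triple) : rat :=
  let: (x1, x2, x3) := x in
  if i == 1%N then x1 / (x2 * x3)
  else if i == 2%N then x2 / (x1 * x3)
  else x3 / (x1 * x2).

Definition kseq (l1 l2 l3 : nat) (w : nat -> nat) (j : nat) : rat :=
  ratio (w j) (Tseq l1 l2 l3 w j).

(** Write [P = x1 x2 x3] for the current triple.  The ratio at position [i] is
    [x_i^2 / P], and mutating at [i'] multiplies [x_i'] by [q / x_i'^2], where [q]
    is the quadratic form in the two other coordinates; hence the new ratio at
    [i'] is [q / P], with the same denominator.  For [i <> i'] the coordinate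
    [x_i] is one of the two variables of [q], and [q] exceeds its square because
    all coordinates stay positive and the [lambda]'s are nonnegative. *)

From mathcomp Require Import all_boot all_order all_algebra.
From mathcomp Require Import ring lra.
(* Imported last so that [Defs.ratio] shadows mathcomp's [{ratio _}] notation. *)
From Pilot Require Import Defs.
Set Implicit Arguments. Unset Strict Implicit. Unset Printing Implicit Defensive.
Import Order.TTheory GRing.Theory Num.Theory.
Local Open Scope ring_scope.

Lemma sqr_lt_markov_form (R : realDomainType) (l x y : R) :
  0 <= l -> 0 < x -> 0 < y ->
  (x ^+ 2 < x ^+ 2 + l * x * y + y ^+ 2) && (y ^+ 2 < x ^+ 2 + l * x * y + y ^+ 2).
Proof.
move=> l_ge0 x_gt0 y_gt0.
have lxy_ge0 : 0 <= l * x * y by rewrite !mulr_ge0 // ltW.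
by apply/andP; split; nra.
Qed.

Lemma markov_form_gt0 (R : realDomainType) (l x y : R) :
  0 <= l -> 0 < x -> 0 < y -> 0 < x ^+ 2 + l * x * y + y ^+ 2.
Proof.
move=> l_ge0 x_gt0 y_gt0; apply: lt_trans (exprn_gt0 2 x_gt0) _.
by case/andP: (sqr_lt_markov_form l_ge0 x_gt0 y_gt0).
Qed.

Section Mutation.

Variables l1 l2 l3 : nat.

Definition positive_triple (x : triple) : Prop :=
  let: (x1, x2, x3) := x in [/\ 0 < x1, 0 < x2 & 0 < x3].

Definition coord (i : nat) (x : triple) : rat :=
  let: (x1, x2, x3) := x in
  if i == 1%N then x1 else if i == 2%N then x2 else x3.

Definition tprod (x : triple) : rat := let: (x1, x2, x3) := x in x1 * x2 * x3.

Definition exchange_poly (i : nat) (x : triple) : rat :=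
  let: (x1, x2, x3) := x in
  if i == 1%N then x2 ^+ 2 + l1%:R * x2 * x3 + x3 ^+ 2
  else if i == 2%N then x1 ^+ 2 + l2%:R * x1 * x3 + x3 ^+ 2
  else x1 ^+ 2 + l3%:R * x1 * x2 + x2 ^+ 2.

Lemma tprod_gt0 x : positive_triple x -> 0 < tprod x.
Proof. by case: x => [[x1 x2] x3] [? ? ?]; rewrite !mulr_gt0. Qed.

Lemma coord_sqr_lt_exchange_poly i i' x : positive_triple x ->
  (1 <= i <= 3)%N -> (1 <= i' <= 3)%N -> i != i' ->
  coord i x ^+ 2 < exchange_poly i' x.
Proof.
case: x => [[x1 x2] x3] [x1_gt0 x2_gt0 x3_gt0].
have l_ge0 (l : nat) : 0 <= l%:R :> rat by rewrite ler0n.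
case: i => [|[|[|[|?]]]] //; case: i' => [|[|[|[|?]]]] // _ _ _ /=.
- by case/andP: (sqr_lt_markov_form (l_ge0 l2) x1_gt0 x3_gt0).
- by case/andP: (sqr_lt_markov_form (l_ge0 l3) x1_gt0 x2_gt0).
- by case/andP: (sqr_lt_markov_form (l_ge0 l1) x2_gt0 x3_gt0).
- by case/andP: (sqr_lt_markov_form (l_ge0 l3) x1_gt0 x2_gt0).
- by case/andP: (sqr_lt_markov_form (l_ge0 l1) x2_gt0 x3_gt0).
- by case/andP: (sqr_lt_markov_form (l_ge0 l2) x1_gt0 x3_gt0).
Qed.

Lemma positive_triple_mu i x : positive_triple x -> positive_triple (mu l1 l2 l3 i x).
Proof.
case: x => [[x1 x2] x3] [x1_gt0 x2_gt0 x3_gt0] /=.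
have l_ge0 (l : nat) : 0 <= l%:R :> rat by rewrite ler0n.
by do ![case: ifP => _ /=]; split; rewrite // divr_gt0 // markov_form_gt0.
Qed.

Lemma positive_triple_Tseq w j : positive_triple (Tseq l1 l2 l3 w j).
Proof. by elim: j => [|j IHj] /=; [split | apply: positive_triple_mu]. Qed.

Lemma ratioE i x : positive_triple x -> ratio i x = coord i x ^+ 2 / tprod x.
Proof.
case: x => [[x1 x2] x3] [x1_gt0 x2_gt0 x3_gt0] /=.
by do ![case: ifP => _]; field; rewrite ?gt_eqF.
Qed.

Lemma ratio_mu i x : positive_triple x -> (1 <= i <= 3)%N ->
  ratio i (mu l1 l2 l3 i x) = exchange_poly i x / tprod x.
Proof.
case: x => [[x1 x2] x3] [x1_gt0 x2_gt0 x3_gt0].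
by case: i => [|[|[|[|?]]]] // _ /=; field; rewrite ?gt_eqF.
Qed.

End Mutation.

Theorem lemma6p1 (l1 l2 l3 : nat) (w : nat -> nat)
  (hw : forall j : nat, (1 <= j)%N -> (1 <= w j <= 3)%N)
  (hred : forall j : nat, (1 <= j)%N -> w j != w j.+1) :
  forall j : nat, (1 <= j)%N -> kseq l1 l2 l3 w j < kseq l1 l2 l3 w j.+1.
Proof.
move=> j j_ge1; rewrite /kseq /=.
have T_pos := positive_triple_Tseq l1 l2 l3 w j.
rewrite ratio_mu ?ratioE ?(hw j.+1) // ltr_pM2r ?invr_gt0 ?tprod_gt0 //.
exact: coord_sqr_lt_exchange_poly (hw j j_ge1) (hw j.+1 isT) (hred j j_ge1).
Qed.
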